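(* Assume the MDP satisfies the low-rank assumption with parameter $d$. For an arbitrary pair of policies $\pi^\theta=\{\pi^\theta_t\}_{t\in[H]}$ and $\pi^\beta=\{\pi^\beta_t\}_{t\in[H]}$, \[ \widehat{\operatorname{Dis}}\big(d_t^{\pi^\theta},d_t^{\pi^\beta}\big)\le\sum_{i=1}^t\big(\sqrt{dS^2A}\big)^{t-i}\,\|\pi^\theta_i-\pi^\beta_i\|_{\mathrm{op}}\qquad\text{for all }t\in[H]. \]
   Context: MDP: finite state space $\mathcal S$ ($S=|\mathcal S|$), finite action space $\mathcal A$ ($A=|\mathcal A|$), horizon $H$, transitions $P_t(\cdot\mid s,a)$, initial distribution $\mu_1$. Policies $\pi=\{\pi_t:\mathcal S\to\Delta(\mathcal A)\}$, with $s_1\sim\mu_1$, $a_t\sim\pi_t(\cdot\mid s_t)$, $s_{t+1}\sim P_t(\cdot\mid s_t,a_t)$; $d_t^\pi(s,a)=\Pr_\pi(s_t=s,a_t=a)$, viewed as an $S\times A$ matrix; $\pi_t$ is viewed as the $S\times A$ matrix with entries $\pi_t(a\mid s)$. $\|\cdot\|_{\mathrm{op}}$ is the spectral norm and $\widehat{\operatorname{Dis}}(p,q)=\|p-q\|_{\mathrm{op}}$. Low-rank assumption with parameter $d$: with $d'=\lfloor d/2\rfloor$, for each $t$ either $P_t(s'\mid s,a)=\sum_{i=1}^{d'}u_{t,i}(s',s)w_{t,i}(a)$ for all $s',s,a$, or $P_t(s'\mid s,a)=\sum_{i=1}^{d'}u_{t,i}(s)w_{t,i}(s',a)$ for all $s',s,a$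 (and each reward $r_t$ has rank at most $d'$). *)

From HB Require Import structures.
From mathcomp Require Import all_boot all_order all_algebra.
From mathcomp Require Import classical_sets reals.
Set Implicit Arguments. Unset Strict Implicit. Unset Printing Implicit Defensive.
Import Order.TTheory GRing.Theory Num.Theory.
Local Open Scope ring_scope.
Local Open Scope classical_set_scope.

Definition vnorm2 (R : realType) (n : nat) (x : 'cV[R]_n) : R :=
  Num.sqrt (\sum_(i < n) x i 0 ^+ 2).

Definition opnorm (R : realType) (m n : nat) (M : 'M[R]_(m, n)) : R :=
  sup [set vnorm2 (M *m x) | x in [set x : 'cV[R]_n | vnorm2 x <= 1]].

Definition is_distr (R : realType) (n : nat) (p : 'I_n -> R) : Prop :=
  (forall i, 0 <= p i) /\ \sum_(i < n) p i = 1.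

(* A policy at one step: an S x A row-stochastic matrix, entry (s,a) = pi(a|s). *)
Definition is_policy_mx (R : realType) (S A : nat) (p : 'M[R]_(S, A)) : Prop :=
  forall s, is_distr (fun a => p s a).

(* Transitions: P t s a s' = P_t(s' | s, a); policies pi t, t = 1..H;
   initial distribution mu.  [sdist P mu pi k] is the state marginal at
   time k+1:  sdist 0 = mu,
   sdist (k+1) s' = sum_{s,a} sdist k s * pi_(k+1)(a|s) * P_(k+1)(s'|s,a). *)
Fixpoint sdist (R : realType) (S A : nat)
  (P : nat -> 'I_S -> 'I_A -> 'I_S -> R) (mu : 'I_S -> R)
  (pi : nat -> 'M[R]_(S, A)) (k : nat) : 'I_S -> R :=
  match k with
  | 0 => mu
  | k'.+1 => fun s' => \sum_(s < S) \sum_(a < A)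
              sdist P mu pi k' s * pi k'.+1 s a * P k'.+1 s a s'
  end.

(* Occupancy measure d_t^pi(s,a) = Pr_pi(s_t = s, a_t = a), t >= 1,
   as an S x A matrix. *)
Definition occ (R : realType) (S A : nat)
  (P : nat -> 'I_S -> 'I_A -> 'I_S -> R) (mu : 'I_S -> R)
  (pi : nat -> 'M[R]_(S, A)) (t : nat) : 'M[R]_(S, A) :=
  \matrix_(s, a) (sdist P mu pi t.-1 s * pi t s a).

Definition lowrank_step (R : realType) (S A : nat) (d : nat)
  (Pt : 'I_S -> 'I_A -> 'I_S -> R) : Prop :=
  (exists (u : 'I_(d./2) -> 'I_S -> 'I_S -> R) (w : 'I_(d./2) -> 'I_A -> R),
      forall s' s a, Pt s a s' = \sum_(i < d./2) u i s' s * w i a)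
  \/
  (exists (u : 'I_(d./2) -> 'I_S -> R) (w : 'I_(d./2) -> 'I_S -> 'I_A -> R),
      forall s' s a, Pt s a s' = \sum_(i < d./2) u i s * w i s' a).

From HB Require Import structures.
From mathcomp Require Import all_boot all_order all_algebra.
From mathcomp Require Import classical_sets reals.
From mathcomp Require Import ring.
Import Order.TTheory GRing.Theory Num.Theory.
Set Implicit Arguments. Unset Strict Implicit. Unset Printing Implicit Defensive.
Local Open Scope ring_scope.

(* Let D_t = d_t^theta - d_t^beta and let delta_t be the difference of the
   state marginals at time t.  Then
     D_t(s, a) = rho(s) (pi^theta_t - pi^beta_t)(s, a) + delta_(t-1)(s) pi^beta_t(a | s)
   with rho a distribution; as a stochastic matrix maps unit vectors into the
   unit cube, |D_t| <= |pi^theta_t - pi^beta_t| + |delta_(t-1)|_2.  Pushing D_t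
   through the transition kernel yields delta_t, and Cauchy-Schwarz over the
   pairs (s, a) with |M|_F^2 <= S |M|^2 gives |delta_t|_2 <= sqrt(S^2 A) |D_t|.
   The low-rank assumption only forces d >= 1 (a rank-0 kernel is not
   stochastic), so sqrt(S^2 A) <= sqrt(d S^2 A); unrolling the recursion
   gives the geometric sum. *)


Section EuclideanNorm.
Variable R : realType.

Lemma sum_sqr_ge0 (I : finType) (f : I -> R) : 0 <= \sum_i f i ^+ 2.
Proof. by apply: sumr_ge0 => i _; exact: sqr_ge0. Qed.

Lemma sum_sqr_eq0 (I : finType) (f : I -> R) i : \sum_i f i ^+ 2 = 0 -> f i = 0.
Proof.
move=> f0; apply/eqP; rewrite -sqrf_eq0; apply/eqP.
exact: (psumr_eq0P (fun i _ => sqr_ge0 (f i)) f0).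
Qed.

Lemma cauchy_schwarz_sum (I : finType) (f g : I -> R) :
  (\sum_i f i * g i) ^+ 2 <= (\sum_i f i ^+ 2) * (\sum_i g i ^+ 2).
Proof.
set a := \sum_i f i ^+ 2; set b := \sum_i f i * g i; set c := \sum_i g i ^+ 2.
have [a0|a_neq0] := eqVneq a 0.
  by rewrite a0 /b big1 ?expr0n ?mul0r // => i _; rewrite (sum_sqr_eq0 i a0) mul0r.
have a_gt0 : 0 < a by rewrite lt0r a_neq0 sum_sqr_ge0.
(* [b f - a g] is orthogonal to [f]: its squared length is [a (a c - b^2)]. *)
have : \sum_i (b * f i - a * g i) ^+ 2 = a * (a * c - b ^+ 2).
  rewrite (eq_bigr (fun i => b ^+ 2 * f i ^+ 2 - 2 * a * b * (f i * g i)
                             + a ^+ 2 * g i ^+ 2)) => [|i _]; last by ring.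
  by rewrite big_split sumrB /= -!mulr_sumr -/a -/b -/c; ring.
by rewrite -subr_ge0 -(pmulr_rge0 _ a_gt0) => <-; exact: sum_sqr_ge0.
Qed.

Lemma cauchy_schwarz_sum_sqrt (I : finType) (f g : I -> R) :
  \sum_i f i * g i <= Num.sqrt (\sum_i f i ^+ 2) * Num.sqrt (\sum_i g i ^+ 2).
Proof.
rewrite -sqrtrM ?sum_sqr_ge0 //; apply: le_trans (ler_norm _) _.
by rewrite -sqrtr_sqr ler_wsqrtr ?cauchy_schwarz_sum.
Qed.

Variable n : nat.
Implicit Types x y : 'cV[R]_n.

Lemma vnorm2_ge0 x : 0 <= vnorm2 x.
Proof. exact: sqrtr_ge0. Qed.

Lemma sqr_vnorm2 x : vnorm2 x ^+ 2 = \sum_i x i 0 ^+ 2.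
Proof. by rewrite sqr_sqrtr ?sum_sqr_ge0. Qed.

Lemma vnorm2_eq0 x : vnorm2 x = 0 -> x = 0.
Proof.
move=> x0; apply/matrixP => i j; rewrite (ord1 j) mxE.
by have := sqr_vnorm2 x; rewrite x0 expr0n => /esym /sum_sqr_eq0 ->.
Qed.

Lemma vnorm2_0 : vnorm2 (0 : 'cV[R]_n) = 0.
Proof. by rewrite /vnorm2 big1 ?sqrtr0 // => i _; rewrite mxE expr0n. Qed.

Lemma vnorm2D x y : vnorm2 (x + y) <= vnorm2 x + vnorm2 y.
Proof.
rewrite -(ger0_norm (addr_ge0 (vnorm2_ge0 x) (vnorm2_ge0 y))) -sqrtr_sqr.
apply: ler_wsqrtr; rewrite sqrrD !sqr_vnorm2.
have -> : \sum_i (x + y) i 0 ^+ 2 =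
    \sum_i x i 0 ^+ 2 + 2 * \sum_i x i 0 * y i 0 + \sum_i y i 0 ^+ 2.
  by rewrite mulr_sumr -!big_split /=; apply: eq_bigr => i _; rewrite mxE; ring.
rewrite lerD2r lerD2l !mulr2n mulrDl mul1r.
by rewrite lerD // cauchy_schwarz_sum_sqrt.
Qed.

Lemma vnorm2Z (c : R) x : vnorm2 (c *: x) = `|c| * vnorm2 x.
Proof.
rewrite /vnorm2 -sqrtr_sqr -sqrtrM ?sqr_ge0 // mulr_sumr.
by congr Num.sqrt; apply: eq_bigr => i _; rewrite mxE exprMn.
Qed.

Lemma norm_coord_le_vnorm2 x i : `|x i 0| <= vnorm2 x.
Proof.
rewrite -sqrtr_sqr; apply: ler_wsqrtr.
by rewrite (bigD1 i) //= lerDl; apply: sumr_ge0 => j _; exact: sqr_ge0.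
Qed.

Lemma vnorm2_mulmx_le_frobenius m (M : 'M[R]_(m, n)) x :
  vnorm2 (M *m x) <= Num.sqrt (\sum_i \sum_j M i j ^+ 2) * vnorm2 x.
Proof.
rewrite -sqrtrM; last by apply: sumr_ge0 => i _; exact: sum_sqr_ge0.
apply: ler_wsqrtr; rewrite mulr_suml; apply: ler_sum => i _.
by rewrite mxE; exact: cauchy_schwarz_sum.
Qed.

End EuclideanNorm.

Section OperatorNorm.
Variables (R : realType) (m n : nat).
Implicit Types (M : 'M[R]_(m, n)) (x : 'cV[R]_n).

Lemma opnorm_has_sup M :
  has_sup [set vnorm2 (M *m x) | x in [set x | vnorm2 x <= 1]]%classic.
Proof.
split; first by exists (vnorm2 (M *m 0)), 0; rewrite //= vnorm2_0 ler01.
exists (Num.sqrt (\sum_i \sum_j M i j ^+ 2)) => _ [x /= x_le1 <-].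
apply: le_trans (vnorm2_mulmx_le_frobenius M x) _.
by rewrite ler_piMr ?sqrtr_ge0.
Qed.

Lemma vnorm2_mulmx_le_opnorm M x : vnorm2 x <= 1 -> vnorm2 (M *m x) <= opnorm M.
Proof. by move=> x_le1; apply: (sup_upper_bound (opnorm_has_sup M)); exists x. Qed.

Lemma opnorm_ge0 M : 0 <= opnorm M.
Proof.
by have := @vnorm2_mulmx_le_opnorm M 0; rewrite mulmx0 !vnorm2_0 ler01; apply.
Qed.

Lemma vnorm2_mulmx_le M x : vnorm2 (M *m x) <= opnorm M * vnorm2 x.
Proof.
have [x0|x_neq0] := eqVneq (vnorm2 x) 0.
  by rewrite (vnorm2_eq0 x0) mulmx0 !vnorm2_0 mulr0.
have x_gt0 : 0 < vnorm2 x by rewrite lt0r x_neq0 vnorm2_ge0.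
have := @vnorm2_mulmx_le_opnorm M ((vnorm2 x)^-1 *: x).
rewrite -scalemxAr !vnorm2Z ger0_norm ?invr_ge0 ?vnorm2_ge0 // mulVf // lexx.
by rewrite -(ler_pM2r x_gt0) mulrAC mulVf // mul1r; apply.
Qed.

Lemma opnorm_le M (K : R) :
  (forall x, vnorm2 x <= 1 -> vnorm2 (M *m x) <= K) -> opnorm M <= K.
Proof.
move=> M_le; apply: ge_sup; first by case: (opnorm_has_sup M).
by move=> _ [x /= x_le1 <-]; exact: M_le.
Qed.

Lemma sum_sqr_row_le_opnorm M i : \sum_j M i j ^+ 2 <= opnorm M ^+ 2.
Proof.
set z : 'cV[R]_n := \col_j M i j.
have z2 : \sum_j M i j ^+ 2 = vnorm2 z ^+ 2.
  by rewrite sqr_vnorm2; apply: eq_bigr => j _; rewrite mxE.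
(* Pairing row [i] with itself: [|z|^2 = (M z)_i <= |M| |z|]. *)
have : vnorm2 z ^+ 2 <= opnorm M * vnorm2 z.
  rewrite -z2; apply: le_trans (ler_norm _) _.
  have -> : \sum_j M i j ^+ 2 = (M *m z) i 0.
    by rewrite mxE; apply: eq_bigr => j _; rewrite mxE expr2.
  exact: le_trans (norm_coord_le_vnorm2 _ _) (vnorm2_mulmx_le _ _).
rewrite z2 expr2; have [->|z_neq0] := eqVneq (vnorm2 z) 0.
  by rewrite mulr0 sqr_ge0.
have z_gt0 : 0 < vnorm2 z by rewrite lt0r z_neq0 vnorm2_ge0.
by rewrite ler_pM2r // => z_le; rewrite expr2 ler_pM ?vnorm2_ge0.
Qed.

Lemma frobenius_le_opnorm M : \sum_i \sum_j M i j ^+ 2 <= m%:R * opnorm M ^+ 2.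
Proof.
apply: le_trans (ler_sum _ (fun i _ => sum_sqr_row_le_opnorm M i)) _.
by rewrite sumr_const card_ord mulr_natl.
Qed.

End OperatorNorm.

Section Stochastic.
Variable R : realType.

Lemma distr_le1 n (p : 'I_n -> R) i : is_distr p -> p i <= 1.
Proof. by case=> p_ge0 <-; rewrite (bigD1 i) //= lerDl sumr_ge0. Qed.

Lemma distr_sum_sqr_le1 n (p : 'I_n -> R) : is_distr p -> \sum_i p i ^+ 2 <= 1.
Proof.
move=> pd; case: (pd) => p_ge0 <-; apply: ler_sum => i _.
by rewrite expr2 ler_piMr // distr_le1.
Qed.

Lemma sqr_policy_mulmx_le1 S A (Pi : 'M[R]_(S, A)) (x : 'cV[R]_A) s :
  is_policy_mx Pi -> vnorm2 x <= 1 -> (Pi *m x) s 0 ^+ 2 <= 1.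
Proof.
move=> Pi_pol x_le1; rewrite mxE; apply: le_trans (cauchy_schwarz_sum _ _) _.
rewrite -sqr_vnorm2 -[1]mulr1 ler_pM ?sum_sqr_ge0 ?sqr_ge0 ?distr_sum_sqr_le1 //.
by rewrite expr_le1 ?vnorm2_ge0.
Qed.

(* Cauchy-Schwarz over the pairs [(s, a)], then [sum_(s,a,s') Q s a s'^2 <= S A]
   and [sum_(s,a) D s a^2 <= S |D|^2]. *)
Lemma sum_sqr_kernel_push_le S A (D : 'M[R]_(S, A)) (Q : 'I_S -> 'I_A -> 'I_S -> R) :
  (forall s a, is_distr (Q s a)) ->
  \sum_s' (\sum_s \sum_a D s a * Q s a s') ^+ 2 <= (S ^ 2 * A)%:R * opnorm D ^+ 2.
Proof.
move=> Q_distr.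
have pair_cs s' : (\sum_s \sum_a D s a * Q s a s') ^+ 2 <=
    (\sum_s \sum_a D s a ^+ 2) * (\sum_s \sum_a Q s a s' ^+ 2).
  by rewrite !pair_bigA; exact: (cauchy_schwarz_sum (fun p => D p.1 p.2)).
apply: le_trans (ler_sum _ (fun s' _ => pair_cs s')) _; rewrite -mulr_sumr.
have Q_le : \sum_s' \sum_s \sum_a Q s a s' ^+ 2 <= (S * A)%:R.
  apply: le_trans (_ : _ <= \sum_(s < S) \sum_(a < A) 1) _.
    rewrite exchange_big; apply: ler_sum => s _; rewrite exchange_big.
    by apply: ler_sum => a _; exact: distr_sum_sqr_le1.
  by rewrite pair_bigA sumr_const card_prod !card_ord.
apply: le_trans (ler_pM _ _ (frobenius_le_opnorm D) Q_le) _.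
- by apply: sumr_ge0 => s _; exact: sum_sqr_ge0.
- by apply: sumr_ge0 => s' _; apply: sumr_ge0 => s _; exact: sum_sqr_ge0.
by rewrite mulrAC -natrM mulnA mulnn.
Qed.

Lemma opnorm_rows_mix_le S A (rho del : 'I_S -> R) (M Pi : 'M[R]_(S, A)) :
  (forall s, `|rho s| <= 1) -> is_policy_mx Pi ->
  opnorm (\matrix_(s, a) (rho s * M s a + del s * Pi s a)) <=
  opnorm M + Num.sqrt (\sum_s del s ^+ 2).
Proof.
move=> rho_le1 Pi_pol; apply: opnorm_le => x x_le1.
set u : 'cV[R]_S := \col_s (rho s * (M *m x) s 0).
set v : 'cV[R]_S := \col_s (del s * (Pi *m x) s 0).
have -> : \matrix_(s, a) (rho s * M s a + del s * Pi s a) *m x = u + v.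
  apply/matrixP => s j; rewrite (ord1 j) !mxE !mulr_sumr -big_split /=.
  by apply: eq_bigr => a _; rewrite mxE; ring.
apply: le_trans (vnorm2D u v) (lerD _ _).
  apply: le_trans (vnorm2_mulmx_le_opnorm M x_le1).
  apply: ler_wsqrtr; apply: ler_sum => s _; rewrite mxE exprMn ler_piMl ?sqr_ge0 //.
  by rewrite -real_normK ?num_real // exprn_ile1.
apply: ler_wsqrtr; apply: ler_sum => s _.
by rewrite mxE exprMn ler_piMr ?sqr_ge0 ?sqr_policy_mulmx_le1.
Qed.

End Stochastic.

Lemma affine_recursion_le (R : numDomainType) (c : R) (e p : nat -> R) t :
  0 <= c -> (0 < t)%N -> e 1%N <= p 1%N ->
  (forall k, (k.+2 <= t)%N -> e k.+2 <= p k.+2 + c * e k.+1) ->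
  e t <= \sum_(1 <= i < t.+1) c ^+ (t - i) * p i.
Proof.
move=> c_ge0; elim: t => [//|[|t] IH] _ e1 e_rec.
  by rewrite big_nat1 subnn expr0 mul1r.
apply: le_trans (e_rec t (leqnn _)) _.
rewrite big_nat_recr //= subnn expr0 mul1r addrC lerD2l.
apply: le_trans (ler_wpM2l c_ge0 (IH isT e1 _)) _ => [k k_le|].
  by apply: e_rec; exact: ltnW.
rewrite mulr_sumr le_eqVlt; apply/predU1l/eq_big_nat => i /andP[_ i_lt].
by rewrite mulrA -exprS -subSn.
Qed.

(* With [d./2 = 0] the factorisation makes every [Pt s a] vanish, which no
   distribution does; so [d > 0] as soon as some pair [(s, a)] exists. *)
Lemma lowrank_step_size_le (R : realType) S A d (Pt : 'I_S -> 'I_A -> 'I_S -> R) :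
  (forall s a, is_distr (Pt s a)) -> lowrank_step d Pt ->
  (S ^ 2 * A <= d * S ^ 2 * A)%N.
Proof.
move=> Pt_distr Pt_lowrank; rewrite -mulnA.
have [-> //|SA_gt0] := posnP (S ^ 2 * A); apply: leq_pmull.
have /andP[S_gt0 A_gt0] : ((0 < S) && (0 < A))%N.
  by move: SA_gt0; rewrite muln_gt0 expn_gt0 orbF.
case: d Pt_lowrank => // Pt_lowrank.
have Pt0 s' : Pt (Ordinal S_gt0) (Ordinal A_gt0) s' = 0.
  by case: Pt_lowrank => -[u [w ->]]; rewrite big_ord0.
have [_] := Pt_distr (Ordinal S_gt0) (Ordinal A_gt0).
by rewrite big1 // => /eqP; rewrite eq_sym oner_eq0.
Qed.

Section StateOccupancy.
Variables (R : realType) (S A H : nat).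
Variables (P : nat -> 'I_S -> 'I_A -> 'I_S -> R) (mu : 'I_S -> R).
Hypothesis mu_distr : is_distr mu.
Hypothesis P_distr : forall t, (1 <= t <= H)%N -> forall s a, is_distr (P t s a).

Lemma sdist_distr (pi : nat -> 'M[R]_(S, A)) :
  (forall t, (1 <= t <= H)%N -> is_policy_mx (pi t)) ->
  forall k, (k < H)%N -> is_distr (sdist P mu pi k).
Proof.
move=> pi_policy; elim=> [//|k IH] kH.
have k1H : (1 <= k.+1 <= H)%N by rewrite (ltnW kH).
have [sdist_ge0 sdist_sum1] := IH (ltnW kH).
split=> [s'|].
  apply: sumr_ge0 => s _; apply: sumr_ge0 => a _.
  by rewrite !mulr_ge0 //; [case: (pi_policy _ k1H s) | case: (P_distr k1H s a)].
rewrite /= exchange_big -sdist_sum1; apply: eq_bigr => s _.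
rewrite exchange_big -[RHS]mulr1 -(proj2 (pi_policy _ k1H s)) mulr_sumr.
by apply: eq_bigr => a _; rewrite -mulr_sumr (proj2 (P_distr k1H s a)) mulr1.
Qed.

Variables piT piB : nat -> 'M[R]_(S, A).
Hypothesis piT_policy : forall t, (1 <= t <= H)%N -> is_policy_mx (piT t).
Hypothesis piB_policy : forall t, (1 <= t <= H)%N -> is_policy_mx (piB t).

Lemma occ_subE t :
  occ P mu piT t - occ P mu piB t =
  \matrix_(s, a) (sdist P mu piT t.-1 s * (piT t - piB t) s a +
                  (sdist P mu piT t.-1 s - sdist P mu piB t.-1 s) * piB t s a).
Proof. by apply/matrixP => s a; rewrite !mxE; ring. Qed.

Lemma sdist_subSE k s' :
  sdist P mu piT k.+1 s' - sdist P mu piB k.+1 s' =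
  \sum_s \sum_a (occ P mu piT k.+1 - occ P mu piB k.+1) s a * P k.+1 s a s'.
Proof.
rewrite /= -sumrB; apply: eq_bigr => s _; rewrite -sumrB.
by apply: eq_bigr => a _; rewrite !mxE; ring.
Qed.

Lemma opnorm_occ_sub_le t : (1 <= t <= H)%N ->
  opnorm (occ P mu piT t - occ P mu piB t) <=
  opnorm (piT t - piB t) +
  Num.sqrt (\sum_s (sdist P mu piT t.-1 s - sdist P mu piB t.-1 s) ^+ 2).
Proof.
case/andP=> t_gt0 tH; rewrite occ_subE.
have t1H : (t.-1 < H)%N by rewrite prednK.
apply: opnorm_rows_mix_le => [s|]; last by apply: piB_policy; rewrite t_gt0.
have sdist_d := sdist_distr piT_policy t1H.
by rewrite ger0_norm ?distr_le1 //; case: sdist_d.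
Qed.

Lemma sdist_subS_le d k : (k < H)%N -> lowrank_step d (P k.+1) ->
  Num.sqrt (\sum_s (sdist P mu piT k.+1 s - sdist P mu piB k.+1 s) ^+ 2) <=
  Num.sqrt ((d * S ^ 2 * A)%:R) * opnorm (occ P mu piT k.+1 - occ P mu piB k.+1).
Proof.
move=> kH P_lowrank; have Pk_distr := P_distr (t := k.+1) kH.
under eq_bigr do rewrite sdist_subSE.
apply: le_trans (ler_wsqrtr (sum_sqr_kernel_push_le _ Pk_distr)) _.
rewrite sqrtrM ?ler0n // sqrtr_sqr ger0_norm ?opnorm_ge0 //.
by rewrite ler_wpM2r ?opnorm_ge0 // ler_wsqrtr // ler_nat (lowrank_step_size_le Pk_distr).
Qed.

End StateOccupancy.

Theorem lemma1 (R : realType) (S A H d : nat)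
  (P : nat -> 'I_S -> 'I_A -> 'I_S -> R) (mu : 'I_S -> R)
  (piT piB : nat -> 'M[R]_(S, A)) :
  is_distr mu ->
  (forall t, (1 <= t <= H)%N -> forall s a, is_distr (P t s a)) ->
  (forall t, (1 <= t <= H)%N -> lowrank_step d (P t)) ->
  (forall t, (1 <= t <= H)%N -> is_policy_mx (piT t)) ->
  (forall t, (1 <= t <= H)%N -> is_policy_mx (piB t)) ->
  forall t, (1 <= t <= H)%N ->
    opnorm (occ P mu piT t - occ P mu piB t) <=
    \sum_(1 <= i < t.+1)
      (Num.sqrt ((d * S ^ 2 * A)%:R)) ^+ (t - i) * opnorm (piT i - piB i).
Proof.
move=> mu_distr P_distr P_lowrank piT_policy piB_policy t /andP[t_gt0 tH].
have occ_le := opnorm_occ_sub_le mu_distr P_distr piT_policy piB_policy.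
apply: (affine_recursion_le (e := fun t => opnorm (occ P mu piT t - occ P mu piB t))
  (p := fun i => opnorm (piT i - piB i)) (sqrtr_ge0 _) t_gt0) => [|k k2t].
  apply: le_trans (occ_le 1%N _) _; first by rewrite leqnn (leq_trans t_gt0).
  by rewrite big1 ?sqrtr0 ?addr0 // => s _; rewrite subrr expr0n.
have k2H := leq_trans k2t tH.
apply: le_trans (occ_le k.+2 _) _; first by rewrite k2H.
rewrite lerD2l; apply: (sdist_subS_le _ P_distr _ _ (ltnW k2H)).
exact: (P_lowrank k.+1 (ltnW k2H)).
Qed.
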